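(* Let $G$ be a finite simple 3-regular circle graph that does not have two disjoint pairs of twin vertices, and suppose $G$ has the smallest number of vertices among all such graphs. If $G$ is not 2-connected, then $G$ has exactly two cutpoints (cut vertices).
   Context: A circle graph is a simple graph isomorphic to the interlacement graph of a double occurrence word (a sequence in which each of $n$ letters appears exactly twice; letters $a,b$ are adjacent iff they appear in order $abab$ or $baba$). Two distinct vertices $v_1,v_2$ are twins if $N(v_1)\setminus\{v_2\}=N(v_2)\setminus\{v_1\}$, where $N(v)$ is the open neighborhood. *)

From mathcomp Require Import all_boot.
Set Implicit Arguments. Unset Strict Implicit. Unset Printing Implicit Defensive.

Section Graphs.
Variable T : finType.
Implicit Types (e : rel T) (u v x y : T).

Definition simple_graph e := symmetric e /\ irreflexive e.

Definition nbhd e v : {set T} := [set u | e v u].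

Definition cubic e := forall v, #|nbhd e v| = 3.

Definition double_occurrence (w : seq T) := forall x, count_mem x w = 2.

Definition interlaced (w : seq T) a b :=
  let s := filter [pred z | (z == a) || (z == b)] w in
  (s == [:: a; b; a; b]) || (s == [:: b; a; b; a]).

(* e is (isomorphic to) the interlacement graph of a double occurrence word;
   letters of the word are identified with the vertices *)
Definition circle_graph e :=
  exists w : seq T, double_occurrence w /\
    forall a b, e a b = (a != b) && interlaced w a b.

Definition twins e v1 v2 :=
  (v1 != v2) && (nbhd e v1 :\ v2 == nbhd e v2 :\ v1).

Definition two_disjoint_twin_pairs e :=
  exists a b c d, [/\ twins e a b, twins e c d & [disjoint [set a; b] & [set c; d]]].

Definition good_graph e :=
  [/\ 0 < #|T|, simple_graph e, cubic e, circle_graph e & ~ two_disjoint_twin_pairs e].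

Definition delv e v : rel T := [rel x y | [&& e x y, x != v & y != v]].

(* v is a cutpoint: removing v increases the number of components, i.e. some
   two vertices other than v are connected in G but not in G - v *)
Definition cutpoint e v :=
  [exists x, exists y, [&& x != v, y != v, connect e x y & ~~ connect (delv e v) x y]].

Definition two_connected e :=
  [/\ 2 < #|T|, (forall x y, connect e x y) &
      forall v x y, x != v -> y != v -> connect (delv e v) x y].

End Graphs.

From mathcomp Require Import all_boot zify.
Set Implicit Arguments. Unset Strict Implicit. Unset Printing Implicit Defensive.

(* A minimal G is connected, since a component would be a smaller example.  In
   a connected cubic graph a cutpoint c is the end of a bridge: some component
   of G - c contains exactly one of the three neighbours n of c, and then cn is
   a bridge.  Two different bridges cannot exist.  Orient them as uv and yx so
   that the side L of u in G - uv and the side R of y in G - yx avoid the other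
   bridge; then L and R are disjoint and each is attached to the rest of G by
   its bridge alone.  Deleting everything outside L and R and adding the edge
   uy gives a cubic circle graph (splice the double occurrence words of L and
   R at u and y) whose twins are twins of G, and it is smaller since v is
   lost.  So G has a unique bridge, and its cutpoints are the two ends of it. *)

Lemma count_mem_rot (T : eqType) (s : seq T) i a : count_mem a (rot i s) = count_mem a s.
Proof. by apply/permP; rewrite perm_rot. Qed.

Lemma count_mem_filter (T : eqType) (P : pred T) (s : seq T) z :
  P z -> count_mem z (filter P s) = count_mem z s.
Proof. by move=> Pz; rewrite count_filter; apply: eq_count => t /=; case: eqP => // ->; rewrite Pz. Qed.

Lemma count_mem_rot_filter (T : eqType) (P : pred T) (w w' : seq T) k z :
  rot k (filter P w) = filter P w' -> P z -> count_mem z w' = count_mem z w.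
Proof. by move=> E Pz; rewrite -(count_mem_filter w' Pz) -E count_mem_rot count_mem_filter. Qed.

Lemma rot_double (T : eqType) (s : seq T) a : count_mem a s = 2 ->
  exists i t1 t2, [/\ rot i s = a :: t1 ++ a :: t2, a \notin t1 & a \notin t2].
Proof.
move=> c2; have as_ : a \in s by rewrite -has_pred1 has_count c2.
set t := drop (index a s).+1 s ++ take (index a s) s.
have ct : count_mem a t = 1.
  by have := count_mem_rot s (index a s) a; rewrite rot_index //= eqxx c2 => -[].
have at_ : a \in t by rewrite -has_pred1 has_count ct.
have tE : t = take (index a t) t ++ a :: drop (index a t).+1 t.
  by rewrite -drop_index // cat_take_drop.
move: ct; rewrite {1}tE count_cat /= eqxx => ct.
exists (index a s), (take (index a t) t), (drop (index a t).+1 t).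
by rewrite rot_index // -/t -tE -!has_pred1 !has_count; split=> //; lia.
Qed.

Definition alternating (l : bitseq) :=
  (l == [:: true; false; true; false]) || (l == [:: false; true; false; true]).

Lemma alternating_catC (l1 l2 : bitseq) :
  alternating (l1 ++ l2) = alternating (l2 ++ l1).
Proof.
have [l4|] := eqVneq (size (l1 ++ l2)) 4.
  move: l4; case: l1 => [|b1 [|b2 [|b3 [|b4 [|? ?]]]]];
  case: l2 => [|c1 [|c2 [|c3 [|c4 [|? ?]]]]] //= _; rewrite ?cats0 //;
  repeat match goal with b : bool |- _ => case: b end; by [].
have sizeC : size (l2 ++ l1) = size (l1 ++ l2) by rewrite !size_cat addnC.
move=> n4; apply/idP/idP => /orP[]/eqP E; move: n4;
  by rewrite ?E // -sizeC E.
Qed.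

Lemma alternating_blocks i j k :
  alternating (nseq i true ++ nseq j false ++ nseq k true) = false.
Proof.
by case: i => [|[|[|[|[|i]]]]]; case: j => [|[|[|[|[|j]]]]];
   case: k => [|[|[|[|[|k]]]]].
Qed.

Section Interlacing.
Variable T : finType.
Implicit Types (s w : seq T) (a b : T).

Let ab_pred a b := [pred z | (z == a) || (z == b)].

Lemma interlaced_bitseq w a b : a != b ->
  interlaced w a b = alternating (map (pred1 a) (filter (ab_pred a b) w)).
Proof.
move=> ab; rewrite /interlaced /alternating -/(ab_pred a b).
set t := filter _ w; have : all (ab_pred a b) t by apply: filter_all.
have decode (s : seq T) : all (ab_pred a b) s ->
    s = map (fun c : bool => if c then a else b) (map (pred1 a) s).
  elim: s => //= z s IH /andP[zab /IH {1}->]; congr (_ :: _).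
  by case: eqP => // za; case/orP: zab => /eqP.
move=> /decode tE; have ba : (b == a) = false by rewrite eq_sym (negbTE ab).
apply/orP/orP => -[]/eqP E.
- by left; rewrite E /= eqxx ba.
- by right; rewrite E /= eqxx ba.
- by left; rewrite tE E.
- by right; rewrite tE E.
Qed.

Lemma interlacedC w a b : interlaced w a b = interlaced w b a.
Proof.
rewrite /interlaced (@eq_filter _ _ (ab_pred b a)); first by rewrite orbC.
by move=> z; rewrite /= orbC.
Qed.

Lemma interlaced_catC s1 s2 a b : a != b ->
  interlaced (s1 ++ s2) a b = interlaced (s2 ++ s1) a b.
Proof.
by move=> ab; rewrite !interlaced_bitseq // !filter_cat !map_cat alternating_catC.
Qed.

Lemma interlaced_rot i s a b :
  a != b -> interlaced (rot i s) a b = interlaced s a b.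
Proof. by move=> ab; rewrite /rot interlaced_catC // cat_take_drop. Qed.

Lemma interlaced_filter (P : pred T) w a b : P a -> P b ->
  interlaced (filter P w) a b = interlaced w a b.
Proof.
move=> Pa Pb; rewrite /interlaced -filter_predI (@eq_filter _ _ (ab_pred a b)) // => z /=.
by case: eqP => [->|_]; case: eqP => [->|_]; rewrite /= ?Pa ?Pb ?andbF.
Qed.

Lemma interlaced_rot_filter (P : pred T) w w' k a b :
  rot k (filter P w) = filter P w' -> P a -> P b -> a != b ->
  interlaced w' a b = interlaced w a b.
Proof.
move=> E Pa Pb ab.
by rewrite -(interlaced_filter _ Pa Pb) -E interlaced_rot // interlaced_filter.
Qed.

Lemma interlaced_blocks s1 s2 s3 a b :
  a != b -> a \notin s2 -> b \notin s1 -> b \notin s3 ->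
  interlaced (s1 ++ s2 ++ s3) a b = false.
Proof.
move=> ab as2 bs1 bs3.
have outer s : b \notin s -> map (pred1 a) (filter (ab_pred a b) s) = nseq (count_mem a s) true.
  elim: s => //= z s IH; rewrite inE negb_or => /andP[bz /IH {}IH].
  by rewrite [z == b]eq_sym (negbTE bz) orbF; case: eqP => /= [->|_]; rewrite IH ?eqxx.
have inner s : a \notin s -> map (pred1 a) (filter (ab_pred a b) s) = nseq (count_mem b s) false.
  elim: s => //= z s IH; rewrite inE negb_or => /andP[az /IH {}IH].
  rewrite [z == a]eq_sym (negbTE az) /=; case: eqP => /= [->|_]; rewrite IH //.
  by rewrite eq_sym (negbTE ab).
by rewrite interlaced_bitseq // !filter_cat !map_cat outer // inner // outer // alternating_blocks.
Qed.
End Interlacing.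

Lemma interlaced_map (T1 T2 : finType) (h : T1 -> T2) (w : seq T1) a b :
  injective h -> interlaced (map h w) (h a) (h b) = interlaced w a b.
Proof.
move=> hi; rewrite /interlaced filter_map.
rewrite (@eq_filter _ _ [pred z | (z == a) || (z == b)]); last by move=> z; rewrite /= !(inj_eq hi).
have -> : [:: h a; h b; h a; h b] = map h [:: a; b; a; b] by [].
have -> : [:: h b; h a; h b; h a] = map h [:: b; a; b; a] by [].
by rewrite !(inj_eq (inj_map hi)).
Qed.

Section Splice.
Variables (T : finType) (L R : {set T}) (u y : T) (s2 s3 r2 r3 : seq T).
Hypotheses (LR : [disjoint L & R]) (uL : u \in L) (yR : y \in R)
  (sL : {subset s2 ++ s3 <= L}) (rR : {subset r2 ++ r3 <= R})
  (us : u \notin s2 ++ s3) (yr : y \notin r2 ++ r3).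

(* Interleaves the words [u s2 u s3] and [y r2 y r3] so that, across the two
   alphabets, only [u] and [y] alternate. *)
Definition splice := u :: s2 ++ y :: u :: r2 ++ y :: r3 ++ s3.

Let filter_sub (P : {set T}) t : {subset t <= P} -> filter (mem P) t = t.
Proof. by move=> tP; apply/all_filterP/allP. Qed.

Let filter_disjoint (P Q : {set T}) t :
  [disjoint P & Q] -> {subset t <= Q} -> filter (mem P) t = [::].
Proof.
move=> PQ tQ; rewrite (@eq_in_filter _ _ pred0) ?filter_pred0 // => z /tQ zQ /=.
by apply/negbTE; apply: contraL zQ => zP; rewrite (disjointFr PQ zP).
Qed.

Let sub_cat (P : {set T}) t1 t2 : {subset t1 ++ t2 <= P} -> {subset t1 <= P} /\ {subset t2 <= P}.
Proof. by move=> sub; split=> z zt; apply: sub; rewrite mem_cat zt ?orbT. Qed.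

Lemma filter_spliceL : filter (mem L) splice = u :: s2 ++ u :: s3.
Proof.
have [sL2 sL3] := sub_cat sL; have [rR2 rR3] := sub_cat rR.
have yL : (y \in L) = false by rewrite (disjointFl LR yR).
rewrite /splice /= uL filter_cat /= yL /= uL filter_cat /= yL filter_cat.
by rewrite (filter_disjoint LR rR2) (filter_disjoint LR rR3) !filter_sub.
Qed.

Lemma filter_spliceR : filter (mem R) splice = y :: r2 ++ y :: r3.
Proof.
have [sL2 sL3] := sub_cat sL; have [rR2 rR3] := sub_cat rR.
have RL : [disjoint R & L] by rewrite disjoint_sym.
have uR : (u \in R) = false by rewrite (disjointFr LR uL).
rewrite /splice /= uR filter_cat /= yR /= uR filter_cat /= yR filter_cat.
by rewrite (filter_disjoint RL sL2) (filter_disjoint RL sL3) !filter_sub ?cats0.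
Qed.

Let notin_s z : z \in R -> z \notin s2 ++ s3.
Proof. by move=> zR; apply/negP => /sL zL; rewrite (disjointFr LR zL) in zR. Qed.

Let notin_r z : z \in L -> z \notin r2 ++ r3.
Proof. by move=> zL; apply/negP => /rR zR; rewrite (disjointFr LR zL) in zR. Qed.

Let neqLR z t : z \in L -> t \in R -> z != t.
Proof. by move=> zL tR; apply: contraTneq tR => <-; rewrite (disjointFr LR zL). Qed.

Lemma interlaced_splice_uy : interlaced splice u y.
Proof.
have nil t : u \notin t -> y \notin t -> [seq z <- t | (z == u) || (z == y)] = [::].
  move=> ut yt; rewrite (@eq_in_filter _ _ pred0) ?filter_pred0 // => z zt /=.
  by apply/negbTE/norP; split; [apply: contraNneq ut|apply: contraNneq yt] => <-.
move: (notin_s yR) (notin_r uL) us yr; rewrite !mem_cat !negb_or.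
move=> /andP[ys2 ys3] /andP[ur2 ur3] /andP[us2 us3] /andP[yr2 yr3].
have yu : (y == u) = false by rewrite eq_sym (negbTE (neqLR uL yR)).
rewrite /splice /interlaced /= (eqxx u) filter_cat nil //= (eqxx y) yu orbT.
by rewrite filter_cat nil //= (eqxx u) filter_cat nil //= (eqxx y) orbT nil // eqxx.
Qed.

Lemma interlaced_splice a b : a \in L -> b \in R ->
  interlaced splice a b = (a == u) && (b == y).
Proof.
move=> aL bR; have ab := neqLR aL bR; have ay := neqLR aL yR.
have bu : b != u by rewrite eq_sym neqLR.
move: (notin_s bR) (notin_r aL) (notin_r uL); rewrite !mem_cat !negb_or.
move=> /andP[bs2 bs3] /andP[ar2 ar3] /andP[ur2 ur3].
have [->|au] := eqVneq a u; last first.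
  have -> : splice = (u :: s2) ++ (y :: u :: r2 ++ y :: r3) ++ s3 by rewrite /= -catA.
  by rewrite interlaced_blocks // ?inE ?mem_cat ?inE ?negb_or ?au ?ay ?ar2 ?ar3 ?bs2 ?bu.
have [->|yb] := eqVneq b y; first by rewrite interlaced_splice_uy.
have -> : splice = (u :: s2 ++ [:: y; u]) ++ (r2 ++ y :: r3) ++ s3 by rewrite /= -!catA.
have uy := neqLR uL yR.
by rewrite interlaced_blocks ?inE ?mem_cat ?inE ?negb_or ?uy ?ur2 ?ur3 ?bs2 ?bs3 ?bu ?yb // eq_sym.
Qed.
End Splice.

Lemma set2_inj (T : finType) (a b c d : T) :
  [set a; b] = [set c; d] -> a != d -> a = c /\ b = d.
Proof.
move=> E ad; have aE : a \in [set c; d] by rewrite -E set21.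
have ac : a = c by case/set2P: aE => // ad'; rewrite ad' eqxx in ad.
split=> //; have bE : b \in [set c; d] by rewrite -E set22.
case/set2P: bE => // bc; have /set2P[dc|db] : d \in [set a; b] by rewrite E set22.
  by rewrite dc ac eqxx in ad.
by rewrite db bc ac eqxx in ad.
Qed.

Lemma twinsC (T : finType) (f : rel T) a b : twins f a b = twins f b a.
Proof. by rewrite /twins eq_sym [_ :\ a == _]eq_sym. Qed.

Section EnumeratedSubgraph.
Variables (T : finType) (f : rel T) (S : {set T}) (x0 : T).
Hypotheses (x0S : x0 \in S) (fsym : symmetric f) (firr : irreflexive f)
  (f_in : forall a b, f a b -> b \in S)
  (fcub : forall v, v \in S -> #|nbhd f v| = 3)
  (fword : exists W : seq T, (forall z, z \in S -> count_mem z W = 2) /\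
     forall a b, a \in S -> b \in S -> f a b = (a != b) && interlaced W a b)
  (ftwins : forall a b c d, [&& a \in S, b \in S, c \in S & d \in S] ->
     twins f a b -> twins f c d -> ~~ [disjoint [set a; b] & [set c; d]]).

Local Notation val := (@enum_val T (mem S)).
Local Notation rank := (enum_rank_in x0S).
Let g := [rel i j : 'I_#|S| | f (val i) (val j)].

Let val_inj : injective val := @enum_val_inj _ _.

Let rankK z : z \in S -> val (rank z) = z.
Proof. exact: enum_rankK_in. Qed.

Let nbhd_val i : [set val j | j in nbhd g i] = nbhd f (val i).
Proof.
apply/setP => z; apply/imsetP/idP => [[j]|fz]; first by rewrite !inE => ? ->.
rewrite inE in fz; have zS := f_in fz; exists (rank z); last by rewrite rankK.
by rewrite inE /= rankK.
Qed.

Let twins_val i j : twins g i j -> twins f (val i) (val j).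
Proof.
rewrite /twins (inj_eq val_inj) => /andP[-> /eqP/setP E] /=; apply/eqP/setP => z.
have [zS|zS] := boolP (z \in S); last first.
  have nf a : f a z = false by apply: contraNF zS => /f_in.
  by rewrite !inE !nf !andbF.
by have := E (rank z); rewrite !inE /g /= -!(inj_eq val_inj) !rankK.
Qed.

Lemma good_graph_enum_val : good_graph g.
Proof.
have [W [Wcount Winterlaced]] := fword.
split.
- by apply/card_gt0P; exists (rank x0).
- by split=> [i j|i] /=; [exact: fsym|exact: firr].
- by move=> i; rewrite -(card_imset _ val_inj) nbhd_val fcub ?enum_valP.
- set W' := [seq rank z | z <- W & z \in S]; exists W'.
  have mapE : map val W' = [seq z <- W | z \in S].
    by rewrite -map_comp; apply/map_id_in => z; rewrite mem_filter => /andP[/rankK].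
  split=> [i|i j].
    rewrite count_map count_filter -(Wcount _ (enum_valP i)).
    apply: eq_count => z /=; have [zS|zS] := boolP (z \in S).
      by rewrite andbT -(inj_eq val_inj) rankK.
    by rewrite andbF; apply/esym; apply: contraNF zS => /eqP->; apply: enum_valP.
  rewrite /= Winterlaced ?enum_valP // (inj_eq val_inj) -(interlaced_map _ _ _ val_inj).
  by rewrite mapE interlaced_filter ?enum_valP.
- case=> [a [b [c [d [tab tcd]]]]]; apply/negP.
  have im2 p q : [set val p; val q] = val @: [set p; q] by rewrite imsetU1 imset_set1.
  by rewrite -(imset_disjoint val_inj) -!im2 ftwins ?enum_valP ?twins_val.
Qed.
End EnumeratedSubgraph.

Section Bridges.
Variables (T : finType) (e : rel T).
Hypothesis sym_e : symmetric e.
Implicit Types (u v x y z : T) (L : {set T}).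

Definition dele u v : rel T := [rel a b | e a b && ([set a; b] != [set u; v])].

Definition bridge u v := e u v && ~~ connect (dele u v) u v.

Definition side u v : {set T} := [set z | connect (dele u v) u z].

Definition pendant L u v :=
  [/\ u \in L, v \notin L, e u v &
      forall z t, z \in L -> t \notin L -> e z t -> z = u /\ t = v].

Lemma dele_sym u v : symmetric (dele u v).
Proof. by move=> a b; rewrite /dele /= sym_e setUC. Qed.

Lemma deleC u v : dele u v =2 dele v u.
Proof. by move=> a b; rewrite /dele /= [[set v; u]]setUC. Qed.

Lemma delv_sym v : symmetric (delv e v).
Proof. by move=> a b; rewrite /delv /= sym_e [(b != v) && _]andbC. Qed.

Lemma bridgeC u v : bridge u v -> bridge v u.
Proof.
case/andP=> euv nc; rewrite /bridge sym_e euv (eq_connect (deleC v u)).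
by rewrite (sym_connect_sym (dele_sym u v)).
Qed.

Lemma side_closed u v : closed (dele u v) (side u v).
Proof.
move=> a b dab; rewrite !inE.
exact: connect_closed (sym_connect_sym (dele_sym u v)) _ _ _ dab.
Qed.

Lemma bridge_pendant u v : bridge u v -> pendant (side u v) u v.
Proof.
case/andP=> euv nc; have uL : u \in side u v by rewrite inE connect0.
have vL : v \notin side u v by rewrite inE.
split=> // z t zL tL ezt.
have E : [set z; t] = [set u; v].
  apply/eqP; apply: contraNT tL => ne.
  by rewrite -(@side_closed u v z t) // /dele /= ezt.
by apply: set2_inj E _; apply: contraTneq zL => ->.
Qed.

Lemma side_disjoint u v : bridge u v -> [disjoint side u v & side v u].
Proof.
case/andP=> _ nuv; apply/pred0P => z /=; rewrite !inE; apply/negP => /andP[uz vz].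
rewrite (eq_connect (deleC v u)) (sym_connect_sym (dele_sym u v)) in vz.
by rewrite (connect_trans uz vz) in nuv.
Qed.

Lemma bridge_same_side u v c d : e c d -> [set c; d] != [set u; v] ->
  (c \in side u v) = (d \in side u v).
Proof. by move=> ecd ne; apply: side_closed; rewrite /dele /= ecd. Qed.

Lemma pendant_closed_delv L u v : pendant L u v -> closed (delv e u) L.
Proof.
case=> _ _ _ port; apply: intro_closed; first exact/sym_connect_sym/delv_sym.
move=> a b /and3P[eab au _] aL; apply: contraT => bL.
by have [/eqP] := port a b aL bL eab; rewrite (negbTE au).
Qed.

Lemma pendant_disjoint_side L u v x y :
  pendant L u v -> y \notin L -> u \notin side y x -> [disjoint L & side y x].
Proof.
case=> _ _ _ port yL uR.
pose P := [pred a | (a \in side y x) ==> (a \notin L)].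
have clP : closed (dele y x) P.
  move=> a b dab; have sab := side_closed dab; have eab : e a b by case/andP: dab.
  rewrite /P -!topredE /= -sab; case aR: (a \in side y x) => //=; congr negb.
  have bR : b \in side y x by rewrite -sab.
  apply/idP/idP => [aL|bL]; apply: contraT => nL.
    by have [au _] := port a b aL nL eab; rewrite -au aR in uR.
  have eba : e b a by rewrite sym_e.
  by have [bu _] := port b a bL nL eba; rewrite -bu bR in uR.
apply/pred0P => z /=; apply/andP => -[zL zR].
have yz : connect (dele y x) y z by rewrite inE in zR.
by have := closed_connect clP yz; rewrite -!topredE /= zR zL (negbTE yL) implybT.
Qed.
End Bridges.

Section ConnectedCubic.
Variables (T : finType) (e : rel T).
Hypotheses (sym_e : symmetric e) (irr_e : irreflexive e) (cub_e : cubic e)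
  (conn_e : forall x y, connect e x y).

Lemma connect_delv_neq c z t : z != c -> connect (delv e c) z t -> t != c.
Proof.
move=> zc; have cl : closed (delv e c) [pred t | t != c].
  by move=> a b /and3P[_ ac bc]; rewrite !inE ac bc.
by move/(closed_connect cl); rewrite !inE zc => <-.
Qed.

Lemma other_neighbour u v : e u v -> exists2 a, e u a & a != v.
Proof.
move=> euv; have : 0 < #|nbhd e u :\ v|.
  by have := cub_e u; rewrite (cardsD1 v) inE euv add1n => -[->].
by case/card_gt0P=> a; rewrite !inE => /andP[av eua]; exists a.
Qed.

Lemma bridge_cutpoint u v : bridge e u v -> cutpoint e u.
Proof.
move=> buv; have pend := bridge_pendant sym_e buv; have [_ vL euv _] := pend.
have [a eua av] := other_neighbour euv.
have ne z : e u z -> z != u by move=> euz; apply: contraTneq euz => ->; rewrite irr_e.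
apply/existsP; exists v; apply/existsP; exists a; rewrite !ne // conn_e /=.
have uv : u != v by rewrite eq_sym ne.
have aL : a \in side e u v.
  rewrite inE connect1 // /dele /= eua; apply: contra av => /eqP E.
  by have [_ ->] := set2_inj E uv.
apply/negP => /(closed_connect (pendant_closed_delv sym_e pend)).
by rewrite aL (negbTE vL).
Qed.

Lemma component_neighbour c z : z != c -> exists2 n, e c n & connect (delv e c) z n.
Proof.
move=> zc; apply/exists_inP; apply: contraT => /exists_inPn none.
pose K := connect (delv e c) z.
have : closed e K.
  apply: (intro_closed (sym_connect_sym sym_e)) => a b eab aK.
  have [bc|bc] := eqVneq b c.
    have eca : e c a by rewrite sym_e -bc.
    by case/negP: (none a eca).
  have ac := connect_delv_neq zc aK.
  by apply: connect_trans aK (connect1 _); rewrite /delv /= eab ac bc.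
move/closed_connect/(_ z c (conn_e z c)) => zcK.
have cK : c \in K by rewrite -zcK; apply: connect0.
by have := connect_delv_neq zc cK; rewrite eqxx.
Qed.

Lemma lonely_neighbour_bridge c n : e c n ->
  (forall m, e c m -> connect (delv e c) n m -> m = n) -> bridge e c n.
Proof.
move=> ecn lonely; rewrite /bridge ecn /=.
have nc : n != c by apply: contraTneq ecn => ->; rewrite irr_e.
pose K := connect (delv e c) n.
have : closed (dele e c n) K.
  apply: (intro_closed (sym_connect_sym (dele_sym sym_e c n))) => a b /andP[eab ab] aK.
  have [bc|bc] := eqVneq b c.
    have an : a = n by apply: lonely; rewrite // sym_e -bc.
    by rewrite an bc setUC eqxx in ab.
  have ac := connect_delv_neq nc aK.
  by apply: connect_trans aK (connect1 _); rewrite /delv /= eab ac bc.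
move/closed_connect => clK; apply/negP => cn.
have cK : c \in K.
  rewrite -(clK n c); first exact: connect0.
  by rewrite (sym_connect_sym (dele_sym sym_e c n)).
by have := connect_delv_neq nc cK; rewrite eqxx.
Qed.

Lemma cutpoint_bridge c : cutpoint e c -> exists n, bridge e c n.
Proof.
case/existsP=> x /existsP[y /and4P[xc yc _ nxy]].
pose A z := nbhd e c :&: [set t | connect (delv e c) z t].
have lonely z : #|A z| = 1 -> exists n, bridge e c n.
  move/eqP/cards1P=> [n An]; exists n.
  have : n \in A z by rewrite An set11.
  rewrite !inE => /andP[ecn zn]; apply: lonely_neighbour_bridge => // m ecm nm.
  by apply/set1P; rewrite -An !inE ecm (connect_trans zn nm).
have A_gt0 z : z != c -> 0 < #|A z|.
  by case/component_neighbour=> n ecn zn; apply/card_gt0P; exists n; rewrite !inE ecn.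
have dis : [disjoint A x & A y].
  apply/pred0P => t /=; apply/negP; rewrite !inE => /andP[/andP[_ xt] /andP[_ yt]].
  rewrite (sym_connect_sym (delv_sym sym_e c)) in yt.
  by rewrite (connect_trans xt yt) in nxy.
have : #|A x :|: A y| <= #|nbhd e c| by apply/subset_leq_card; rewrite subUset !subsetIl.
have [_] := leq_card_setU (A x) (A y); rewrite dis cub_e => /eqP-> le3.
have [/lonely //|nx] := eqVneq #|A x| 1.
by apply: (lonely y); move: nx le3 (A_gt0 x xc) (A_gt0 y yc); lia.
Qed.

Lemma cubic_card_gt3 : 0 < #|T| -> 3 < #|T|.
Proof.
case/card_gt0P=> x0 _; have : #|x0 |: nbhd e x0| <= #|T|.
  by rewrite -cardsT subset_leq_card ?subsetT.
by rewrite cardsU1 cub_e inE irr_e.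
Qed.

Lemma exists_cutpoint : 0 < #|T| -> ~ two_connected e -> exists c, cutpoint e c.
Proof.
move=> T0 not2; have [c cc|none] := pickP (cutpoint e); first by exists c.
case: not2; split=> [|//|c x y xc yc]; first exact: ltnW (cubic_card_gt3 T0).
apply: contraFT (none c) => nxy; apply/existsP; exists x; apply/existsP; exists y.
by rewrite xc yc conn_e.
Qed.
End ConnectedCubic.

Section Glue.
Variables (T : finType) (e : rel T) (L R : {set T}) (u v y x : T).
Hypotheses (sym_e : symmetric e) (irr_e : irreflexive e) (cub_e : cubic e)
  (pendL : pendant e L u v) (pendR : pendant e R y x) (disLR : [disjoint L & R])
  (vR : v \notin R).

(* Everything outside [L :|: R] is cut away (those vertices become isolated)
   and the edge [uy] is added. *)
Definition glue : rel T :=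
  [rel a b | [&& a \in L :|: R, b \in L :|: R & e a b || ([set a; b] == [set u; y])]].

Let uL : u \in L. Proof. by case: pendL. Qed.
Let yR : y \in R. Proof. by case: pendR. Qed.
Let vL : v \notin L. Proof. by case: pendL. Qed.
Let euv : e u v. Proof. by case: pendL. Qed.
Let portL z t : z \in L -> t \notin L -> e z t -> z = u /\ t = v.
Proof. by case: pendL => _ _ _; apply. Qed.
Let notR z : z \in L -> z \notin R.
Proof. by move=> zL; rewrite (disjointFr disLR zL). Qed.

Lemma glue_sym : symmetric glue.
Proof. by move=> a b; rewrite /glue /= sym_e [[set b; a]]setUC andbCA. Qed.

Lemma glueL_E a b : a \in L ->
  glue a b = (e a b && (b != v)) || ((a == u) && (b == y)).
Proof.
move=> aL; have ay : a != y by apply: contraTneq yR => <-; rewrite notR.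
have [bL|bL] := boolP (b \in L).
  have by_ : b != y by apply: contraTneq yR => <-; rewrite notR.
  have bv : b != v by apply: contraTneq bL => ->.
  rewrite /glue /= !inE aL bL bv (negbTE by_) andbT andbF orbF /=.
  case: eqP => [/set2_inj-/(_ ay) [_ bE]|_]; last by rewrite orbF.
  by rewrite bE eqxx in by_.
have ebv : e a b -> b = v by case/(portL aL bL).
have [/ebv ->|nab] := boolP (e a b).
  rewrite /glue /= !inE (negbTE vL) (negbTE vR) eqxx andbF /=.
  by apply/esym/andP => -[_ /eqP vy]; move: vR; rewrite vy yR.
rewrite /glue /= !inE aL (negbTE bL) /=; case: eqP => [/set2_inj-/(_ ay) [-> ->]|ne].
  by rewrite yR orbT (eqxx u) (eqxx y).
rewrite (negbTE nab) andbF; apply/esym/andP => -[/eqP au /eqP b_y].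
by apply: ne; rewrite au b_y.
Qed.

Lemma glue_cross a b : a \in L -> b \in R -> glue a b = (a == u) && (b == y).
Proof.
move=> aL bR; have bL : b \notin L by apply: contraL bR; apply: notR.
rewrite glueL_E //; case: (boolP (e a b)) => [/(portL aL bL)[_ bv]|] //=.
by move: bR; rewrite bv (negbTE vR).
Qed.

Lemma glueL a b : a \in L -> b \in L -> glue a b = e a b.
Proof.
move=> aL bL; have bv : b != v by apply: contraTneq bL => ->.
have by_ : (b == y) = false by apply: contraTF yR => /eqP <-; rewrite notR.
by rewrite glueL_E // bv by_ andbT andbF orbF.
Qed.

Lemma glue_nbhdL z : z \in L -> z != u -> nbhd glue z = nbhd e z.
Proof.
move=> zL zu; apply/setP => t; rewrite !inE glueL_E // (negbTE zu) orbF.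
case ezt: (e z t) => //=; apply: contraNneq zu => tv.
by rewrite tv in ezt; case: (portL zL vL ezt) => ->.
Qed.

Lemma glue_nbhd_u : nbhd glue u = y |: (nbhd e u :\ v).
Proof. by apply/setP => t; rewrite !inE glueL_E // eqxx andbC orbC. Qed.

Lemma glue_cubL z : z \in L -> #|nbhd glue z| = 3.
Proof.
move=> zL; have [->|zu] := eqVneq z u; last by rewrite glue_nbhdL.
have yN : y \notin nbhd e u :\ v.
  rewrite !inE; apply/andP => -[yv euy].
  by case: (portL uL (contraL (@notR y) yR) euy) => _ /eqP; rewrite (negbTE yv).
have := cub_e u; rewrite (cardsD1 v) inE euv add1n => -[N2].
by rewrite glue_nbhd_u cardsU1 yN N2.
Qed.

Lemma glue_not_twins_u b : b \in L :|: R -> ~~ twins glue u b.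
Proof.
rewrite /twins => bS; apply/negP => /andP[ub /eqP E].
have [l eul lv] := other_neighbour cub_e euv.
have lL : l \in L by apply: contraT => lL; case: (portL uL lL eul) => _ /eqP; rewrite (negbTE lv).
case/setUP: bS => [bL|bR].
  have : y \in nbhd glue u :\ b.
    rewrite in_setD1 glue_nbhd_u setU11 andbT.
    by apply: contraTneq yR => ->; rewrite notR.
  rewrite E in_setD1 inE glue_cross // => /andP[_ /andP[/eqP bu _]].
  by rewrite bu eqxx in ub.
have : l \in nbhd glue u :\ b.
  rewrite in_setD1 glue_nbhd_u !inE eul lv orbT andbT.
  by apply: contraTneq bR => <-; rewrite notR.
rewrite E in_setD1 inE glue_sym glue_cross // => /andP[_ /andP[/eqP lu _]].
by rewrite lu irr_e in eul.
Qed.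
End Glue.

Section GlueBothSides.
Variables (T : finType) (e : rel T) (L R : {set T}) (u v y x : T).
Hypotheses (sym_e : symmetric e) (irr_e : irreflexive e) (cub_e : cubic e)
  (pendL : pendant e L u v) (pendR : pendant e R y x) (disLR : [disjoint L & R])
  (vR : v \notin R) (xL : x \notin L).
Variable w : seq T.
Hypotheses (dw : double_occurrence w) (iw : forall a b, e a b = (a != b) && interlaced w a b).
Let disRL : [disjoint R & L]. Proof. by rewrite disjoint_sym. Qed.
Local Notation G := (glue e L R u y).
Local Notation G' := (glue e R L y u).

Lemma glueC : G' =2 G.
Proof. by move=> a b; rewrite /glue /= setUC [[set y; u]]setUC. Qed.

Let nbhd_glueC z : nbhd G' z = nbhd G z.
Proof. by apply/setP => t; rewrite !inE glueC. Qed.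

Lemma glue_irr : irreflexive G.
Proof.
move=> a; have [aL|aL] := boolP (a \in L); first by rewrite (glueL pendL pendR) ?irr_e.
have [aR|aR] := boolP (a \in R); first by rewrite -glueC (glueL pendR pendL) ?irr_e.
by rewrite /glue /= inE (negbTE aL) (negbTE aR).
Qed.

Lemma glue_in a b : G a b -> b \in L :|: R.
Proof. by case/and3P. Qed.

Lemma glue_cub z : z \in L :|: R -> #|nbhd G z| = 3.
Proof.
case/setUP => [zL|zR]; first exact: (glue_cubL cub_e pendL pendR).
by rewrite -nbhd_glueC (glue_cubL cub_e pendR pendL).
Qed.

Let glue_nbhd z : z \in L :|: R -> z != u -> z != y -> nbhd G z = nbhd e z.
Proof.
move=> + zu zy; case/setUP => [zL|zR]; first exact: (glue_nbhdL pendL pendR).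
by rewrite -nbhd_glueC (glue_nbhdL pendR pendL).
Qed.

Let glue_twins_end a b : a \in L :|: R -> b \in L :|: R -> twins G a b -> (a != u) && (a != y).
Proof.
move=> aS bS tab; apply/andP; split; apply: contraTneq tab => ->.
  exact: (glue_not_twins_u sym_e irr_e cub_e pendL pendR).
have bS' : b \in R :|: L by rewrite setUC.
rewrite /twins -!nbhd_glueC -/(twins G' y b).
exact: (glue_not_twins_u sym_e irr_e cub_e pendR pendL disRL xL bS').
Qed.

Lemma glue_twins a b : a \in L :|: R -> b \in L :|: R -> twins G a b -> twins e a b.
Proof.
move=> aS bS tab; have /andP[au ay] := glue_twins_end aS bS tab.
rewrite twinsC in tab; have /andP[bu b_y] := glue_twins_end bS aS tab.
by rewrite twinsC /twins -!glue_nbhd.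
Qed.

Lemma glue_word : exists W : seq T, (forall z, z \in L :|: R -> count_mem z W = 2) /\
  forall a b, a \in L :|: R -> b \in L :|: R -> G a b = (a != b) && interlaced W a b.
Proof.
have [uL _ _ _] := pendL; have [yR _ _ _] := pendR.
have cnt (P : {set T}) z : z \in P -> count_mem z (filter (mem P) w) = 2.
  by move=> zP; rewrite count_mem_filter ?(dw z).
have sub (P : {set T}) k c t1 t2 :
    rot k (filter (mem P) w) = c :: t1 ++ c :: t2 -> {subset t1 ++ t2 <= P}.
  move=> E z zt; have : z \in rot k (filter (mem P) w).
    by rewrite E !inE !mem_cat !inE; move: zt; rewrite mem_cat => /orP[]->; rewrite ?orbT.
  by rewrite mem_rot mem_filter => /andP[].
have [i [s2 [s3 [rotL us2 us3]]]] := rot_double (cnt L u uL).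
have [j [r2 [r3 [rotR yr2 yr3]]]] := rot_double (cnt R y yR).
have us : u \notin s2 ++ s3 by rewrite mem_cat negb_or us2 us3.
have yr : y \notin r2 ++ r3 by rewrite mem_cat negb_or yr2 yr3.
have sL := sub _ _ _ _ _ rotL; have rR := sub _ _ _ _ _ rotR.
have WL : rot i (filter (mem L) w) = filter (mem L) (splice u y s2 s3 r2 r3).
  by rewrite (filter_spliceL disLR).
have WR : rot j (filter (mem R) w) = filter (mem R) (splice u y s2 s3 r2 r3).
  by rewrite (filter_spliceR disLR).
exists (splice u y s2 s3 r2 r3); split.
  by move=> z /setUP[] zP; [rewrite (count_mem_rot_filter WL)|rewrite (count_mem_rot_filter WR)].
move=> a b aS bS; have [<-|ab] := eqVneq a b; first by rewrite glue_irr.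
case/setUP: aS => [aL|aR]; case/setUP: bS => [bL|bR].
- by rewrite (glueL pendL pendR) // iw ab (interlaced_rot_filter WL).
- by rewrite (glue_cross pendL pendR) // (interlaced_splice disLR).
- rewrite (glue_sym _ _ _ _ sym_e) (glue_cross pendL pendR) // interlacedC.
  by rewrite (interlaced_splice disLR).
- by rewrite -glueC (glueL pendR pendL) // iw ab (interlaced_rot_filter WR).
Qed.
End GlueBothSides.

Lemma card_lt_notin (T : finType) (S : {set T}) z : z \notin S -> #|S| < #|T|.
Proof.
move=> zS; rewrite -cardsT; apply: proper_card; rewrite properT.
by apply: contraNneq zS => ->; rewrite inE.
Qed.

Section MinimalCounterexample.
Variables (T : finType) (e : rel T) (w : seq T).
Hypotheses (sym_e : symmetric e) (irr_e : irreflexive e) (cub_e : cubic e)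
  (dw : double_occurrence w) (iw : forall a b, e a b = (a != b) && interlaced w a b)
  (no_twins : ~ two_disjoint_twin_pairs e)
  (Hmin : forall (n : nat) (e' : rel 'I_n), good_graph e' -> #|T| <= n).

Lemma minimal_card_le (f : rel T) (S : {set T}) x0 : x0 \in S ->
  symmetric f -> irreflexive f -> (forall a b, f a b -> b \in S) ->
  (forall z, z \in S -> #|nbhd f z| = 3) ->
  (exists W : seq T, (forall z, z \in S -> count_mem z W = 2) /\
     forall a b, a \in S -> b \in S -> f a b = (a != b) && interlaced W a b) ->
  (forall a b, a \in S -> b \in S -> twins f a b -> twins e a b) ->
  #|T| <= #|S|.
Proof.
move=> x0S fsym firr f_in fcub fword ftwins.
apply: Hmin (good_graph_enum_val x0S fsym firr f_in fcub fword _).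
move=> a b c d /and4P[aS bS cS dS] tab tcd; apply/negP => dis.
by apply: no_twins; exists a, b, c, d; split=> //; apply: ftwins.
Qed.

Lemma minimal_connected x y : connect e x y.
Proof.
pose S := [set z | connect e x z].
have clS : closed e S.
  by move=> a b eab; rewrite !inE; apply: connect_closed (sym_connect_sym sym_e) _ _ _ eab.
pose f := [rel a b | (a \in S) && e a b].
have fe a b : a \in S -> f a b = e a b by move=> /= ->.
have nbhd_f a : a \in S -> nbhd f a = nbhd e a.
  by move=> aS; apply/setP => t; rewrite !inE; apply: fe.
have : #|T| <= #|S|.
  apply: (@minimal_card_le f S x).
  - by rewrite inE connect0.
  - by move=> a b /=; rewrite sym_e; case eab: (e b a); rewrite ?andbF ?andbT // (clS _ _ eab).
  - by move=> a /=; rewrite irr_e andbF.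
  - by move=> a b /andP[aS eab]; rewrite -(clS _ _ eab).
  - by move=> a aS; rewrite nbhd_f.
  - by exists w; split=> // a b aS _; rewrite -iw; apply: fe.
  - by move=> a b aS bS; rewrite /twins !nbhd_f.
rewrite -cardsT => le; have /eqP SE : S == [set: T] by rewrite eqEcard subsetT.
by have := in_setT y; rewrite -SE inE.
Qed.

Lemma no_pendant_pair (L R : {set T}) u v y x :
  pendant e L u v -> pendant e R y x -> [disjoint L & R] -> v \notin R -> x \notin L -> False.
Proof.
move=> pendL pendR disLR vR xL; have [uL vL _ _] := pendL.
have : #|T| <= #|L :|: R|.
  apply: (@minimal_card_le (glue e L R u y) _ u); rewrite ?inE ?uL //.
  - exact: glue_sym.
  - exact: (glue_irr irr_e pendL pendR).
  - exact: glue_in.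
  - exact: (glue_cub cub_e pendL pendR).
  - exact: (glue_word sym_e irr_e pendL pendR disLR vR xL dw iw).
  - exact: (glue_twins sym_e irr_e cub_e pendL pendR).
by rewrite leqNgt (card_lt_notin (z := v)) // inE negb_or vL.
Qed.

Lemma bridges_sides u v x y : bridge e u v -> bridge e x y ->
  x \notin side e u v -> y \notin side e u v ->
  u \notin side e y x -> v \notin side e y x -> False.
Proof.
move=> buv bxy xL yL uR vR; have pendL := bridge_pendant sym_e buv.
apply: (no_pendant_pair pendL (bridge_pendant sym_e (bridgeC sym_e bxy))) => //.
exact: pendant_disjoint_side pendL yL uR.
Qed.

Lemma bridge_far_side u v x y : bridge e u v -> bridge e x y ->
  [set u; v] != [set x; y] -> x \notin side e u v -> False.
Proof.
move=> buv bxy ne xL; have /andP[euv _] := buv; have /andP[exy _] := bxy.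
have yL : y \notin side e u v by rewrite -(bridge_same_side sym_e exy) // eq_sym.
have [uR|uR] := boolP (u \in side e y x).
  have uR' : u \notin side e x y by rewrite (disjointFr (side_disjoint sym_e (bridgeC sym_e bxy)) uR).
  have vR' : v \notin side e x y by rewrite -(bridge_same_side sym_e euv).
  exact: bridges_sides buv (bridgeC sym_e bxy) yL xL uR' vR'.
have vR : v \notin side e y x by rewrite -(bridge_same_side sym_e euv) // [[set y; x]]setUC.
exact: bridges_sides buv bxy xL yL uR vR.
Qed.

Lemma bridges_eq u v x y : bridge e u v -> bridge e x y -> [set u; v] = [set x; y].
Proof.
move=> buv bxy; apply/eqP/negPn/negP => ne.
have [xL|xL] := boolP (x \in side e u v); last exact: bridge_far_side buv bxy ne xL.
apply: (bridge_far_side (bridgeC sym_e buv) bxy); first by rewrite setUC.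
by rewrite (disjointFr (side_disjoint sym_e buv) xL).
Qed.
End MinimalCounterexample.

Theorem proposition8 (T : finType) (e : rel T)
  (HG : good_graph e)
  (Hmin : forall (n : nat) (e' : rel 'I_n), good_graph e' -> #|T| <= n)
  (Hnot2 : ~ two_connected e) :
  #|[set v | cutpoint e v]| = 2.
Proof.
case: HG => T0 [sym_e irr_e] cub_e [w [dw iw]] no_twins.
have conn_e := minimal_connected sym_e irr_e cub_e dw iw no_twins Hmin.
have bridges_eq := bridges_eq sym_e irr_e cub_e dw iw no_twins Hmin.
have [c cut_c] := exists_cutpoint irr_e cub_e conn_e T0 Hnot2.
have [n bcn] := cutpoint_bridge sym_e irr_e cub_e conn_e cut_c.
have -> : [set v | cutpoint e v] = [set c; n].
  apply/setP => z; rewrite inE; apply/idP/set2P => [cut_z|[]->].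
  - have [m bzm] := cutpoint_bridge sym_e irr_e cub_e conn_e cut_z.
    by apply/set2P; rewrite -(bridges_eq _ _ _ _ bzm bcn) set21.
  - exact: (bridge_cutpoint sym_e irr_e cub_e conn_e bcn).
  - exact: (bridge_cutpoint sym_e irr_e cub_e conn_e (bridgeC sym_e bcn)).
have /andP[ecn _] := bcn.
by rewrite cards2 (contraTneq _ ecn) // => ->; rewrite irr_e.
Qed.
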